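(* Let $\{v_k(t)\}_{k\ge 0}$ be a monic polynomial sequence ($\deg v_k=k$) of complex polynomials. Let $(g_k)_{k\ge0}$ be complex numbers with $g_0=0$ and $g_k\neq 0$ for $k\ge 1$, and let $(h_k)_{k\ge 0}$ be complex numbers with $h_k\neq h_j$ whenever $k\neq j$. Let $\gamma$ and $\phi$ be the linear operators on the space of complex polynomials defined by $\gamma v_k=g_k v_{k-1}$ for $k\ge1$, $\gamma v_0=0$, and $\phi v_k=h_k v_k$ for $k\ge 0$. Then the monic polynomial sequence $\{u_n(t)\}_{n\ge 0}$ ($\deg u_n=n$) satisfying $$\gamma u_n(t)+\phi u_n(t)=h_n u_n(t),\qquad n\ge 0,$$ is given by $u_n(t)=\sum_{k=0}^n c_{n,k}v_k(t)$, where $c_{n,n}=1$ for $n\ge0$ and $$c_{n,k}=\prod_{j=k}^{n-1}\frac{g_{j+1}}{h_n-h_j},\qquad 0\le k\le n-1.$$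
   Context: A polynomial sequence is a sequence of polynomials $p_0,p_1,\dots$ with $\deg p_n=n$; it is monic if each $p_n$ is monic. Every polynomial sequence is a basis of the space of polynomials. *)

From HB Require Import structures.
From mathcomp Require Import all_boot all_order all_algebra.
From mathcomp Require Import complex.
From mathcomp Require Import Rstruct.
From Stdlib Require Import Reals.
Set Implicit Arguments. Unset Strict Implicit. Unset Printing Implicit Defensive.
Import Order.TTheory GRing.Theory Num.Theory.
Local Open Scope ring_scope.

Definition CC : fieldType := (complex R : fieldType).

Definition monic_poly_seq (p : nat -> {poly CC}) : Prop :=
  forall n : nat, p n \is monic /\ size (p n) = n.+1.

Definition coef_c (g h : nat -> CC) (n k : nat) : CC :=
  if k == n then 1
  else \prod_(k <= j < n) (g j.+1 / (h n - h j)).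

(* Put T := gamma + phi.  Then T v_k = h_k v_k + g_k v_(k-1), so T is triangular
   in the basis (v_k) with diagonal (h_k): it does not raise degrees and it
   multiplies the coefficient of t^m of a polynomial of degree at most m by h_m.
   As the h_k are distinct, a nonzero polynomial of degree m < n cannot satisfy
   T p = h_n p, which gives uniqueness of the monic solutions u_n.  Existence:
   the recurrence c_(n,k) (h_n - h_k) = g_(k+1) c_(n,k+1) is exactly what makes
   T (sum_k c_(n,k) v_k) = h_n (sum_k c_(n,k) v_k). *)
From HB Require Import structures.
From mathcomp Require Import all_boot all_order all_algebra.
From mathcomp Require Import complex Rstruct.
Import GRing.Theory.
Local Open Scope ring_scope.

Set Implicit Arguments.
Unset Strict Implicit.

Lemma size_sub_eq_coef_top (R : nzRingType) (p q : {poly R}) m :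
  (size p <= m.+1)%N -> (size q <= m.+1)%N -> p`_m = q`_m ->
  (size (p - q)%R <= m)%N.
Proof.
move=> /leq_sizeP sp /leq_sizeP sq pqm; apply/leq_sizeP => j.
rewrite leq_eqVlt coefB => /predU1P [<- | ltmj]; first by rewrite pqm subrr.
by rewrite sp // sq // subrr.
Qed.

Section TriangularOperator.
Variables (F : idomainType) (v : nat -> {poly F}) (g h : nat -> F).
Variable T : {linear {poly F} -> {poly F}}.
Hypothesis v_monic : forall n, v n \is monic /\ size (v n) = n.+1.
Hypothesis g0 : g 0%N = 0.
Hypothesis Tv : forall k, T (v k) = h k *: v k + g k *: v k.-1.

Lemma size_v n : size (v n) = n.+1.
Proof. by have [] := v_monic n. Qed.

Lemma coef_v_top n : (v n)`_n = 1.
Proof. by have [/monicP] := v_monic n; rewrite lead_coefE size_v. Qed.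

Lemma size_sub_coef_top_v (p : {poly F}) m :
  (size p <= m.+1)%N -> (size (p - p`_m *: v m)%R <= m)%N.
Proof.
move=> sp; apply: size_sub_eq_coef_top => //; last by rewrite coefZ coef_v_top mulr1.
by rewrite (leq_trans (size_scale_leq _ _)) ?size_v.
Qed.

Lemma size_g_v_pred m : (size (g m *: v m.-1) <= m)%N.
Proof.
case: m => [|m]; first by rewrite g0 scale0r size_poly0.
by rewrite (leq_trans (size_scale_leq _ _)) ?size_v.
Qed.

Lemma T_expand_top (p : {poly F}) m :
  T p = T (p - p`_m *: v m) + p`_m *: (h m *: v m + g m *: v m.-1).
Proof. by rewrite -Tv -linearZ -linearD subrK. Qed.

Lemma size_T_leq (p : {poly F}) n : (size p <= n)%N -> (size (T p) <= n)%N.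
Proof.
elim: n p => [|m IHm] p sp.
  by move: sp; rewrite size_poly_leq0 => /eqP ->; rewrite linear0 size_poly0.
rewrite (T_expand_top p m) (leq_trans (size_polyD _ _)) // geq_max.
rewrite (leqW (IHm _ _)) ?size_sub_coef_top_v //.
rewrite (leq_trans (size_scale_leq _ _)) // (leq_trans (size_polyD _ _)) //.
by rewrite geq_max (leqW (size_g_v_pred m)) (leq_trans (size_scale_leq _ _)) ?size_v.
Qed.

Lemma coef_T_top (p : {poly F}) m : (size p <= m.+1)%N -> (T p)`_m = h m * p`_m.
Proof.
move=> sp; have /size_T_leq/leq_sizeP Tq0 := size_sub_coef_top_v sp.
have /leq_sizeP gv0 := size_g_v_pred m.
rewrite (T_expand_top p m) coefD Tq0 // coefZ coefD gv0 // coefZ coef_v_top.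
by rewrite add0r addr0 mulr1 mulrC.
Qed.

Lemma T_eigen_eq0 (p : {poly F}) n c : (forall k, (k < n)%N -> h k != c) ->
  (size p <= n)%N -> T p = c *: p -> p = 0.
Proof.
move=> hc sp Tp; apply/eqP; rewrite -size_poly_eq0.
case sp_eq: (size p) => [//|m].
have : lead_coef p != 0 by rewrite lead_coef_eq0 -size_poly_eq0 sp_eq.
rewrite lead_coefE sp_eq /= => lcp.
have := coef_T_top (eq_leq sp_eq); rewrite Tp coefZ => /(mulIf lcp)/eqP.
by rewrite eq_sym (negbTE (hc m _)) // -ltnS -sp_eq.
Qed.

Lemma size_coef_top_sum_v n (a : nat -> F) :
  (size (\sum_(k < n.+1) a k *: v k)%R <= n.+1)%N /\
  (\sum_(k < n.+1) a k *: v k)`_n = a n.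
Proof.
split.
  apply/(leq_trans (size_sum _ _ _))/bigmax_leqP => k _.
  rewrite (leq_trans (size_scale_leq _ _)) // size_v.
  exact: ltn_ord.
rewrite coef_sum big_ord_recr /= big1 ?add0r => [|k _].
  by rewrite coefZ coef_v_top mulr1.
by rewrite coefZ nth_default ?mulr0 // size_v.
Qed.

Lemma T_eigen_sum_v n (a : nat -> F) :
  (forall k, (k < n)%N -> a k * (h n - h k) = g k.+1 * a k.+1) ->
  T (\sum_(k < n.+1) a k *: v k) = h n *: \sum_(k < n.+1) a k *: v k.
Proof.
move=> a_rec; rewrite linear_sum scaler_sumr.
under eq_bigr do rewrite linearZ /= Tv scalerDr !scalerA.
rewrite big_split /= [X in _ + X]big_ord_recl g0 mulr0 scale0r add0r.
rewrite big_ord_recr [RHS]big_ord_recr /= addrAC -big_split /= scalerA mulrC.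
congr (_ + _); apply: eq_bigr => k _.
rewrite /bump leq0n add0n /= scalerA -scalerDl; congr (_ *: _).
by rewrite add1n [_ * g _]mulrC -a_rec // mulrBr addrC subrK mulrC.
Qed.

End TriangularOperator.

Lemma coef_c_rec (g h : nat -> CC) n :
  (forall i j : nat, i <> j -> h i <> h j) -> forall k, (k < n)%N ->
  coef_c g h n k * (h n - h k) = g k.+1 * coef_c g h n k.+1.
Proof.
move=> h_inj k ltkn.
have hnk : h n - h k != 0 by rewrite subr_eq0; apply/eqP/h_inj/eqP; rewrite gtn_eqF.
rewrite /coef_c (ltn_eqF ltkn) big_ltn //; case: eqP => [-> | _].
  by rewrite big_geq // !mulr1 divfK.
by rewrite mulrAC divfK.
Qed.

Unset Implicit Arguments.

Theorem theorem1
  (v : nat -> {poly CC}) (g h : nat -> CC)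
  (gamma phi : {linear {poly CC} -> {poly CC}})
  (hv : monic_poly_seq v)
  (hg0 : g 0%N = 0) (hg : forall k : nat, (0 < k)%N -> g k != 0)
  (hh : forall k j : nat, k <> j -> h k <> h j)
  (hgamma0 : gamma (v 0%N) = 0)
  (hgamma : forall k : nat, (0 < k)%N -> gamma (v k) = g k *: v k.-1)
  (hphi : forall k : nat, phi (v k) = h k *: v k) :
  forall u : nat -> {poly CC}, monic_poly_seq u ->
    ((forall n : nat, gamma (u n) + phi (u n) = h n *: u n) <->
     (forall n : nat, u n = \sum_(k < n.+1) coef_c g h n k *: v k)).
Proof.
have Tv k : (gamma \+ phi) (v k) = h k *: v k + g k *: v k.-1.
  rewrite /= hphi addrC; case: k => [|k]; last by rewrite hgamma.
  by rewrite hgamma0 hg0 scale0r.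
have eigen_c n : gamma (\sum_(k < n.+1) coef_c g h n k *: v k) +
    phi (\sum_(k < n.+1) coef_c g h n k *: v k) =
    h n *: \sum_(k < n.+1) coef_c g h n k *: v k.
  exact: (T_eigen_sum_v hg0 Tv (coef_c_rec (n := n) g hh)).
move=> u hu; split => [Tu n | u_eq n]; last by rewrite u_eq; exact: eigen_c.
have [sw wn] := size_coef_top_sum_v hv n (coef_c g h n).
apply/eqP; rewrite -subr_eq0; apply/eqP/(T_eigen_eq0 hv hg0 Tv (n := n) (c := h n)).
- by move=> k ltkn; apply/eqP/hh/eqP; rewrite ltn_eqF.
- apply: size_sub_eq_coef_top sw _; first by have [_ ->] := hu n.
  by rewrite wn /coef_c eqxx (coef_v_top hu).
- by rewrite linearB /= Tu eigen_c scalerBr.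
Qed.
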